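(* Let $m$ be a positive integer, and let $\langle \mathscr{A} \mid \mathscr{R} \rangle$ be a generator-minimal strongly $C(2)$ presentation for a monoid which admits a strongly $C(m)$ presentation. Then $\langle \mathscr{A} \mid \mathscr{R} \rangle$ is a strongly $C(m)$ presentation.
   Context: A monoid presentation $\langle \mathscr{A} \mid \mathscr{R} \rangle$ consists of an alphabet $\mathscr{A}$ and a set $\mathscr{R} \subseteq \mathscr{A}^* \times \mathscr{A}^*$ of relations; the monoid presented is $\mathscr{A}^*$ modulo the smallest congruence $\equiv_\mathscr{R}$ containing $\mathscr{R}$. A relation word is a word occurring as one side of a relation. A piece is a word which occurs as a factor of two distinct relation words, or in two different (possibly overlapping) positions within one relation word; the empty word is always a piece. For a positive integer $n$ the presentation is $C(n)$ if no relation word can be written as a product of strictly fewer than $n$ pieces, and strongly $C(n)$ if it is $C(n)$ and in addition has no repeated relation words (no relation word occurs more than once as a side of a relation). A generator $a$ is redundant if it is $\equiv_\mathscr{R}$-equivalent to a product of zero or more other generators; the presentation is generator-minimal if it has no redundant generators. *)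

From Stdlib Require List.
From mathcomp Require Import all_boot.
Set Implicit Arguments. Unset Strict Implicit. Unset Printing Implicit Defensive.

Section Presentations.
Variable A : Type.

Definition rels := seq A * seq A -> Prop.

Inductive cong (R : rels) : seq A -> seq A -> Prop :=
| cong_base l r : R (l, r) -> cong R l r
| cong_refl u : cong R u u
| cong_sym u v : cong R u v -> cong R v u
| cong_trans u v w : cong R u v -> cong R v w -> cong R u w
| cong_ctx x y u v : cong R u v -> cong R (x ++ u ++ y) (x ++ v ++ y).

Definition relation_word (R : rels) (w : seq A) : Prop :=
  exists r, R (w, r) \/ R (r, w).

Definition piece (R : rels) (p : seq A) : Prop :=
  p = [::] \/
  exists w1 w2 x1 y1 x2 y2,
    [/\ relation_word R w1, relation_word R w2,
        w1 = x1 ++ p ++ y1, w2 = x2 ++ p ++ y2 &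
        (w1 <> w2 \/ x1 <> x2)].

Definition C_cond (n : nat) (R : rels) : Prop :=
  forall w, relation_word R w ->
    ~ (exists ps : seq (seq A),
         [/\ size ps < n, (forall p, List.In p ps -> piece R p) & flatten ps = w]).

Definition side (rel : seq A * seq A) (b : bool) : seq A :=
  if b then rel.2 else rel.1.

Definition no_repeated_relation_words (R : rels) : Prop :=
  forall rel1 rel2 b1 b2, R rel1 -> R rel2 ->
    side rel1 b1 = side rel2 b2 -> rel1 = rel2 /\ b1 = b2.

Definition strongly_C (n : nat) (R : rels) : Prop :=
  C_cond n R /\ no_repeated_relation_words R.

Definition redundant (R : rels) (a : A) : Prop :=
  exists w : seq A, (forall b, List.In b w -> b <> a) /\ cong R [:: a] w.

Definition generator_minimal (R : rels) : Prop := forall a, ~ redundant R a.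
End Presentations.

(* Monoid isomorphism A^*/~R  ->  B^*/~S, given on representatives:
   F is well defined and injective on classes, surjective onto classes,
   multiplicative and unit-preserving. *)
Definition presented_iso (A B : Type) (R : rels A) (S : rels B) : Prop :=
  exists F : seq A -> seq B,
    [/\ (forall u v, cong R u v -> cong S (F u) (F v)),
        (forall u v, cong S (F u) (F v) -> cong R u v),
        (forall w, exists u, cong S (F u) w),
        (forall u v, cong S (F (u ++ v)) (F u ++ F v)) &
        cong S (F [::]) [::]].

Definition admits_strongly_C (m : nat) (A : Type) (R : rels A) : Prop :=
  exists (B : Type) (S : rels B), strongly_C m S /\ presented_iso R S.

(* In a generator-minimal strongly C(2) presentation no relation word is empty
   or a single letter, so every generator of R is alone in its congruence class.
   An isomorphism onto the monoid presented by S must then send each generator a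
   to a single letter phi a, and a word u to map phi u.
   The heart of the matter is that map phi sends relation words of R to relation
   words of S.  For a relation word w:
   - map phi w contains no letter that is itself a relation word of S: such a
     letter can only be rewritten into a letter of its own class, so the parts
     of a word before and after its first letter from that class are congruence
     invariants, and this would force w to equal its partner;
   - eliminating single-letter relation words of S turns S-congruence into
     congruence for the relations whose sides both have length at least 2, and
     map phi w is congruent in that sense to the different word map phi w';
   - every proper factor of map phi w is the image of an irreducible word, so it
     contains no such long relation word.
   Hence map phi w is a relation word of S, pieces of R map to pieces of S, and a
   factorisation of a relation word of R into fewer than m pieces would give one
   in S. *)

From mathcomp Require Import all_boot zify.
From Stdlib Require Import Classical ClassicalEpsilon.
Set Implicit Arguments. Unset Strict Implicit. Unset Printing Implicit Defensive.

Lemma In_split T (b : T) w : List.In b w -> exists x y, w = x ++ b :: y.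
Proof.
elim: w => [//|a w IH] /= [<-|/IH [x [y ->]]]; first by exists [::], w.
by exists (a :: x), y.
Qed.

Lemma factor_letter T (b : T) x r y : x ++ r ++ y = [:: b] -> r = [::] \/ r = [:: b].
Proof.
case: x => [|c [|? ?]] //=; last by case: r => [|? ?] //; left.
by case: r => [|c [|? ?]] //=; [left | case: y => //= [[->]]; right].
Qed.

Lemma has_In T (q : pred T) s : has q s <-> exists2 b, List.In b s & q b.
Proof.
elim: s => [|a s IH] /=; first by split=> // -[].
split=> [/orP [qa|/IH [b bs qb]] | [b [<-|bs] qb]]; first by exists a; [left|].
- by exists b; [right|].
- by rewrite qb.
- by apply/orP; right; apply/IH; exists b.
Qed.

Lemma In_map T U (f : T -> U) b s :
  List.In b (map f s) -> exists2 a, b = f a & List.In a s.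
Proof.
elim: s => [//|a s IH] /= [<-|/IH [c -> cs]]; first by exists a; [|left].
by exists c; [|right].
Qed.

Lemma map_eq_cat T U (f : T -> U) s x y : map f s = x ++ y ->
  exists s1 s2, [/\ s = s1 ++ s2, map f s1 = x & map f s2 = y].
Proof.
elim: x s => [|a x IH] s /=; first by move=> <-; exists [::], s.
case: s => [|b s] //= [ba /IH [s1 [s2 [-> <- <-]]]].
by exists (b :: s1), s2; rewrite /= ba.
Qed.

Section Congruence.
Variables (T : Type) (P : rels T).

Lemma cong_cat u u' v v' : cong P u u' -> cong P v v' -> cong P (u ++ v) (u' ++ v').
Proof.
move=> uu' vv'; apply: (@cong_trans _ _ _ (u' ++ v)).
  exact: (cong_ctx [::] v uu').
by have := cong_ctx u' [::] vv'; rewrite !cats0.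
Qed.

Definition irreducible (u : seq T) : Prop :=
  forall x r y, u = x ++ r ++ y -> ~ relation_word P r.

Lemma irreducible_factor x u y : irreducible (x ++ u ++ y) -> irreducible u.
Proof. by move=> irr x' r y' uE; apply: (irr (x ++ x') r (y' ++ y)); rewrite uE !catA. Qed.

Lemma irreducible_cong u v : cong P u v -> irreducible u -> v = u.
Proof.
move=> uv; suff: (irreducible u -> v = u) /\ (irreducible v -> u = v) by case.
elim: uv => {u v} [l r lr | u | u v _ [IH1 IH2] | u v w _ [IH1 IH2] _ [IH3 IH4] |
              x y u v _ [IH1 IH2]].
- by split=> irr; case: (irr [::] _ [::] (esym (cats0 _))); [exists r; left | exists l; right].
- by [].
- by split=> irr; [rewrite IH2 | rewrite IH1].
- split=> irr; first by have vu := IH1 irr; subst v; exact: IH3.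
  by have wv := IH4 irr; subst w; exact: IH2.
- split=> irr; first by rewrite IH1 //; apply: (irreducible_factor (x := x) (y := y)).
  by rewrite IH2 //; apply: (irreducible_factor (x := x) (y := y)).
Qed.

Lemma relation_partner w : no_repeated_relation_words P -> relation_word P w ->
  exists w', [/\ cong P w w', w' <> w & relation_word P w'].
Proof.
move=> norep [r [wr|rw]].
- exists r; split; [exact: cong_base | | by exists w; right].
  by move=> rE; subst r; have [_] := norep _ _ false true wr wr erefl.
- exists r; split; [exact: cong_sym (cong_base rw) | | by exists w; left].
  by move=> rE; subst r; have [_] := norep _ _ false true rw rw erefl.
Qed.

Lemma relation_partner_unique w z z' : no_repeated_relation_words P ->
  P (w, z) \/ P (z, w) -> P (w, z') \/ P (z', w) -> z' = z.
Proof.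
move=> norep [wz|zw] [wz'|z'w].
- by have [[]] := norep _ _ false false wz' wz erefl.
- by have [_] := norep _ _ false true wz z'w erefl.
- by have [_] := norep _ _ true false zw wz' erefl.
- by have [[]] := norep _ _ true true z'w zw erefl.
Qed.

Lemma relation_word_of_minimal_reducible z z' :
  cong P z z' -> z' <> z ->
  (forall x r y, z = x ++ r ++ y -> size r < size z -> ~ relation_word P r) ->
  relation_word P z.
Proof.
move=> zz' z'z proper; apply: NNPP => notrel; apply: z'z.
apply: (irreducible_cong zz') => x r y zE rel.
case: (ltnP (size r) (size z)) => [lt|ge]; first exact: (proper _ _ _ zE lt rel).
have [x0 y0] : x = [::] /\ y = [::].
  by move: ge; rewrite zE !size_cat => ge; split; apply/size0nil; lia.
by subst x y; apply: notrel; rewrite zE cats0.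
Qed.

End Congruence.

Section StronglyC2.
Variables (T : Type) (P : rels T).
Hypothesis C2 : C_cond 2 P.

Lemma nil_not_relation_word : ~ relation_word P [::].
Proof. by move=> rel; apply: (C2 rel); exists [::]. Qed.

Lemma relation_word_not_piece w : relation_word P w -> ~ piece P w.
Proof.
move=> rel pc; apply: (C2 rel); exists [:: w]; split=> //=; last by rewrite cats0.
by move=> p [<-|[]].
Qed.

Lemma irreducible_nil : irreducible P [::].
Proof. by rewrite /irreducible => -[|? ?] [|? ?] y //= _; apply: nil_not_relation_word. Qed.

Definition relation_letter (b : T) : Prop := relation_word P [:: b].

Definition letter_free (u : seq T) : Prop :=
  forall b, List.In b u -> ~ relation_letter b.

Lemma irreducible_letter b : ~ relation_letter b -> irreducible P [:: b].
Proof.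
move=> notrel x r y rE.
by case: (factor_letter (esym rE)) => ->; [exact: nil_not_relation_word | exact: notrel].
Qed.

Lemma relation_letter_isolated b w :
  relation_letter b -> relation_word P w -> List.In b w -> w = [:: b].
Proof.
move=> relb relw bw; have [x [y wE]] := In_split bw; apply: NNPP => wb.
apply: (relation_word_not_piece relb); right.
by exists [:: b], w, [::], [::], x, y; split=> //; left=> w_b; apply: wb.
Qed.

Lemma long_relation_word_letter_free w :
  relation_word P w -> 1 < size w -> letter_free w.
Proof. by move=> relw long b bw relb; rewrite (relation_letter_isolated relb relw bw) in long. Qed.

Lemma proper_factor_irreducible w x f y :
  relation_word P w -> w = x ++ f ++ y -> size f < size w -> irreducible P f.
Proof.
move=> relw wE lt x' r y' fE relr; apply: (relation_word_not_piece relr); right.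
exists w, r, (x ++ x'), (y' ++ y), [::], [::]; split=> //; first by rewrite wE fE !catA.
  by rewrite cats0.
by left=> wr; move: lt; rewrite fE wr !size_cat; lia.
Qed.

End StronglyC2.

Section FirstOccurrence.
Variables (T : Type) (q : pred T).

Definition before_first (s : seq T) : seq T := take (find q s) s.
Definition after_first (s : seq T) : seq T := drop (find q s).+1 s.

Lemma first_occurrenceE x0 s :
  has q s -> s = before_first s ++ nth x0 s (find q s) :: after_first s.
Proof. by rewrite has_find => lt; rewrite -drop_nth // cat_take_drop. Qed.

Lemma before_first_free s : ~~ has q s -> before_first s = s.
Proof. by move=> /hasNfind; rewrite /before_first => ->; rewrite take_size. Qed.

Lemma after_first_free s : ~~ has q s -> after_first s = [::].
Proof. by move=> /hasNfind; rewrite /after_first => ->; rewrite drop_oversize. Qed.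

Lemma before_first_cat x y :
  before_first (x ++ y) = if has q x then before_first x else x ++ before_first y.
Proof.
rewrite /before_first find_cat take_cat; case hx: (has q x); first by rewrite -has_find hx.
by rewrite ltnNge leq_addr /= addKn.
Qed.

Lemma after_first_cat x y :
  after_first (x ++ y) = if has q x then after_first x ++ y else after_first y.
Proof.
rewrite /after_first find_cat drop_cat; case hx: (has q x).
  rewrite has_find in hx; case: ltnP => // le.
  have -> : (find q x).+1 = size x by lia.
  by rewrite subnn drop0 drop_size.
by rewrite ltnNge -addnS leq_addr /= addKn.
Qed.

Variable P : rels T.
Hypothesis isolated : forall l r, P (l, r) -> has q l || has q r ->
  (exists2 a, l = [:: a] & q a) /\ (exists2 b, r = [:: b] & q b).

Lemma cong_first_occurrence u v : cong P u v ->
  [/\ has q u = has q v, cong P (before_first u) (before_first v)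
    & cong P (after_first u) (after_first v)].
Proof.
elim=> {u v} [l r lr | u | u v _ [hq bf af] | u v w _ [hq1 bf1 af1] _ [hq2 bf2 af2] |
              x y u v uv [hq bf af]].
- case hlr: (has q l || has q r).
    have [[a -> qa] [b -> qb]] := isolated lr hlr.
    by rewrite /before_first /after_first /= qa qb; split=> //; apply: cong_refl.
  move/norP: hlr => [hl hr].
  rewrite !before_first_free // !after_first_free //.
  by split; [rewrite (negbTE hl) (negbTE hr) | exact: cong_base | exact: cong_refl].
- by split=> //; apply: cong_refl.
- by split; [| exact: cong_sym | exact: cong_sym].
- by split; [rewrite hq1 | exact: cong_trans bf2 | exact: cong_trans af2].
- rewrite !has_cat !before_first_cat !after_first_cat hq.
  case: (has q x); first by split=> //; [apply: cong_refl | apply: cong_ctx].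
  case: (has q v); split=> //.
  + exact: cong_cat (cong_refl _ _) bf.
  + exact: cong_cat af (cong_refl _ _).
  + exact: cong_ctx.
  + exact: cong_refl.
Qed.

End FirstOccurrence.

Lemma before_first_map T U (f : T -> U) (q : pred U) s :
  before_first q (map f s) = map f (before_first (preim f q) s).
Proof. by rewrite /before_first find_map map_take. Qed.

Lemma after_first_map T U (f : T -> U) (q : pred U) s :
  after_first q (map f s) = map f (after_first (preim f q) s).
Proof. by rewrite /after_first find_map map_drop. Qed.

Section LetterElimination.
Variables (T : Type) (P : rels T).
Hypothesis P_C2 : strongly_C 2 P.

Definition long_relations : rels T :=
  fun rel => [/\ P rel, 1 < size rel.1 & 1 < size rel.2].

Lemma long_relation_word w : relation_word long_relations w -> relation_word P w.
Proof. by move=> [r [[wr _ _]|[rw _ _]]]; exists r; [left|right]. Qed.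

Definition elimination_spec (b : T) (e : seq T) : Prop :=
  (~ relation_letter P b -> e = [:: b]) /\
  forall z, P ([:: b], z) \/ P (z, [:: b]) -> e = if 1 < size z then z else [::].

Lemma exists_letter_elimination : exists eps, forall b, elimination_spec b (eps b).
Proof.
apply: choice => b; case: (classic (relation_letter P b)) => [[z bz]|notrel].
  exists (if 1 < size z then z else [::]); split=> [notrel|z' bz']; first by case: notrel; exists z.
  by rewrite (relation_partner_unique P_C2.2 bz bz').
by exists [:: b]; split=> // z bz; case: notrel; exists z.
Qed.

Variable eps : T -> seq T.
Hypothesis eps_spec : forall b, elimination_spec b (eps b).

Lemma eliminate_letter_free u : letter_free P u -> flatten (map eps u) = u.
Proof.
elim: u => [//|b u IH] free /=.
rewrite IH => [|c cu]; last by apply: free; right.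
by rewrite (eps_spec b).1 //; apply: free; left.
Qed.

Lemma eliminate_relation_word w z : P (w, z) \/ P (z, w) ->
  flatten (map eps w) = if 1 < size w then w else if 1 < size z then z else [::].
Proof.
move=> wz; have relw : relation_word P w by exists z.
case: ltnP => [long|short].
  exact/eliminate_letter_free/(long_relation_word_letter_free P_C2.1 relw).
case: w wz relw short => [|b [|? ?]] // wz relw _.
  by case: (nil_not_relation_word P_C2.1 relw).
by rewrite /= cats0 ((eps_spec b).2 z wz).
Qed.

Lemma cong_eliminate u v :
  cong P u v -> cong long_relations (flatten (map eps u)) (flatten (map eps v)).
Proof.
elim=> {u v} [l r lr | u | u v _ IH | u v w _ IH1 _ IH2 | x y u v _ IH].
- rewrite (eliminate_relation_word (or_introl lr)) (eliminate_relation_word (or_intror lr)).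
  case: (ltnP 1 (size l)) => hl; case: (ltnP 1 (size r)) => hr; try exact: cong_refl.
  exact: cong_base.
- exact: cong_refl.
- exact: cong_sym.
- exact: cong_trans IH1 IH2.
- by rewrite !map_cat !flatten_cat; apply: cong_ctx.
Qed.

End LetterElimination.

Lemma C_cond_le T (P : rels T) n1 n2 : n1 <= n2 -> C_cond n2 P -> C_cond n1 P.
Proof.
move=> le C w relw [ps [size_ps pieces flat]]; apply: (C w relw).
by exists ps; split=> //; apply: leq_trans le.
Qed.

Section LetterMap.
Variables (A B : Type) (R : rels A) (S : rels B) (h : A -> B).
Hypothesis h_inj : injective h.
Hypothesis relation_word_map : forall w, relation_word R w -> relation_word S (map h w).

Lemma piece_map p : piece R p -> piece S (map h p).
Proof.
case=> [->|[w1 [w2 [x1 [y1 [x2 [y2 [rel1 rel2 E1 E2 ne]]]]]]]]; first by left.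
right; exists (map h w1), (map h w2), (map h x1), (map h y1), (map h x2), (map h y2).
split; [exact: relation_word_map | exact: relation_word_map |
        by rewrite E1 !map_cat | by rewrite E2 !map_cat |].
by case: ne => ne; [left | right] => /(inj_map h_inj).
Qed.

Lemma C_cond_map n : C_cond n S -> C_cond n R.
Proof.
move=> C w relw [ps [size_ps pieces flat]]; apply: (C _ (relation_word_map relw)).
exists (map (map h) ps); split; first by rewrite size_map.
  by move=> _ /(In_map (f := map h)) [p -> pps]; apply/piece_map/pieces.
by rewrite -map_flatten flat.
Qed.

End LetterMap.

Lemma letter_irreducible A (R : rels A) a :
  generator_minimal R -> strongly_C 2 R -> irreducible R [:: a].
Proof.
move=> minimal [C2 norep]; apply: irreducible_letter => // -[v av].
have va : v <> [:: a].
  by move=> vE; subst v; case: av => aa; have [_] := norep _ _ false true aa aa erefl.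
case: (classic (List.In a v)) => [a_in|a_notin].
  have rel_v : relation_word R v by exists [:: a]; case: av; [right|left].
  by apply: va; apply: (relation_letter_isolated C2) a_in => //; exists v.
apply: (minimal a); exists v; split; first by move=> b bv ba; subst b.
by case: av => aa; [exact: cong_base | exact/cong_sym/cong_base].
Qed.

Section Isomorphism.
Variables (A B : Type) (R : rels A) (S : rels B) (F : seq A -> seq B).
Hypotheses (F_cong : forall u v, cong R u v -> cong S (F u) (F v))
           (F_reflect : forall u v, cong S (F u) (F v) -> cong R u v)
           (F_onto : forall z, exists u, cong S (F u) z)
           (F_cat : forall u v, cong S (F (u ++ v)) (F u ++ F v))
           (F_nil : cong S (F [::]) [::]).
Hypotheses (R_minimal : generator_minimal R) (R_C2 : strongly_C 2 R) (S_C2 : strongly_C 2 S).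

Lemma R_letter_irreducible a : irreducible R [:: a].
Proof. exact: letter_irreducible. Qed.

Lemma cong_F_nil z : cong S (F [::]) z -> z = [::].
Proof.
move=> nilz; apply: irreducible_cong (irreducible_nil S_C2.1).
exact: cong_trans (cong_sym F_nil) nilz.
Qed.

Lemma cong_F_letter_size a z : cong S (F [:: a]) z -> size z = 1.
Proof.
move=> az.
have preimage u : cong S (F u) z -> u = [:: a].
  move=> uz; apply: irreducible_cong (R_letter_irreducible (a := a)).
  exact: F_reflect (cong_trans az (cong_sym uz)).
case: z az preimage => [|b [|c z]] // az preimage; first by have := preimage _ F_nil.
have [u1 u1b] := F_onto [:: b]; have [u2 u2z] := F_onto (c :: z).
have : u1 ++ u2 = [:: a] by apply: preimage; apply: cong_trans (F_cat u1 u2) (cong_cat u1b u2z).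
case: u1 u1b => [|? [|? ?]] u1b //; first by have := cong_F_nil u1b.
by case: u2 u2z => // u2z; have := cong_F_nil u2z.
Qed.

Lemma F_letter a : exists b, F [:: a] = [:: b].
Proof.
have := cong_F_letter_size (cong_refl _ (F [:: a])).
by case: (F [:: a]) => [|b [|? ?]] // _; exists b.
Qed.

Definition letter_image (a : A) : B :=
  proj1_sig (constructive_indefinite_description _ (F_letter a)).

Lemma F_letterE a : F [:: a] = [:: letter_image a].
Proof. exact: proj2_sig (constructive_indefinite_description _ (F_letter a)). Qed.

Local Notation phi := letter_image.

Lemma cong_F_map u : cong S (F u) (map phi u).
Proof.
elim: u => [|a u IH] /=; first exact: F_nil.
apply: cong_trans (F_cat [:: a] u) _; rewrite F_letterE.
exact: cong_cat (cong_refl _ _) IH.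
Qed.

Lemma cong_map_letter_image u v : cong S (map phi u) (map phi v) <-> cong R u v.
Proof.
split=> uv.
  apply: F_reflect; apply: cong_trans (cong_F_map u) _.
  exact: cong_trans uv (cong_sym (cong_F_map v)).
apply: cong_trans (cong_sym (cong_F_map u)) _.
exact: cong_trans (F_cong uv) (cong_F_map v).
Qed.

Lemma letter_image_inj : injective phi.
Proof.
move=> a b ab; have : cong R [:: a] [:: b].
  by apply/cong_map_letter_image; rewrite /= ab; apply: cong_refl.
by move/irreducible_cong => /(_ (R_letter_irreducible (a := a))) [].
Qed.

Lemma letter_free_image z : letter_free S z -> exists z0, z = map phi z0.
Proof.
elim: z => [|b z IH] free; first by exists [::].
have [z0 ->] := IH (fun c cz => free c (or_intror cz)).
have [u ub] := F_onto [:: b].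
have : map phi u = [:: b].
  apply: irreducible_cong (cong_trans (cong_sym ub) (cong_F_map u)) _.
  by apply/(irreducible_letter S_C2.1)/free; left.
by case: u {ub} => [|a [|? ?]] //= [<-]; exists (a :: z0).
Qed.

(* Letters of B have no decidable equality; the first-occurrence argument needs
   a boolean predicate, so the class of phi a is decided classically. *)
Definition letter_class (a : A) : pred B :=
  fun b => if excluded_middle_informative (cong S [:: b] [:: phi a]) then true else false.

Lemma letter_classP a b : reflect (cong S [:: b] [:: phi a]) (letter_class a b).
Proof. by rewrite /letter_class; case: excluded_middle_informative => ba; constructor. Qed.

Lemma letter_class_image a c : letter_class a (phi c) -> c = a.
Proof.
move/letter_classP; rewrite -[[:: phi c]]/(map phi [:: c]) -[[:: phi a]]/(map phi [:: a]).
by move/cong_map_letter_image/irreducible_cong => /(_ (R_letter_irreducible (a := c))) [].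
Qed.

Lemma letter_class_single a z : cong S z [:: phi a] -> exists b, z = [:: b].
Proof.
move=> za; have := cong_F_letter_size (z := z) (a := a).
rewrite F_letterE => /(_ (cong_sym za)).
by case: z {za} => [|b [|? ?]] // _; exists b.
Qed.

Lemma letter_class_isolated a : relation_letter S (phi a) ->
  forall l r, S (l, r) -> has (letter_class a) l || has (letter_class a) r ->
  (exists2 b, l = [:: b] & letter_class a b) /\ (exists2 b, r = [:: b] & letter_class a b).
Proof.
move=> rel_a.
suff side l r : S (l, r) \/ S (r, l) -> has (letter_class a) l ->
    (exists2 b, l = [:: b] & letter_class a b) /\ (exists2 b, r = [:: b] & letter_class a b).
  move=> l r lr /orP [hl|hr]; first exact: side (or_introl lr) hl.
  by have [? ?] := side r l (or_intror lr) hr; split.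
move=> lr /has_In [b bl /letter_classP ba].
have rel_b : relation_letter S b.
  apply: NNPP => notrel.
  have [ab] := irreducible_cong ba (irreducible_letter S_C2.1 notrel).
  by apply: notrel; rewrite -ab.
have lE : l = [:: b] by apply: (relation_letter_isolated S_C2.1) bl; last exists r.
split; first by exists b => //; apply/letter_classP.
have ra : cong S r [:: phi a].
  apply: cong_trans _ ba; rewrite -lE.
  by case: lr => lr; [exact/cong_sym/cong_base | exact: cong_base].
have [c rE] := letter_class_single ra.
by exists c => //; apply/letter_classP; rewrite -rE.
Qed.

Lemma relation_word_image_letter_free w : relation_word R w -> letter_free S (map phi w).
Proof.
move=> relw _ /(In_map (f := phi)) [a -> aw] rel_a.
have [w' [ww' w'w _]] := relation_partner R_C2.2 relw.
have [has_eq bf af] := cong_first_occurrence (letter_class_isolated rel_a)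
  (proj2 (cong_map_letter_image _ _) ww').
rewrite !has_map !before_first_map !after_first_map !cong_map_letter_image in has_eq bf af.
set q := preim phi (letter_class a) in has_eq bf af.
have qw : has q w by apply/has_In; exists a => //; apply/letter_classP/cong_refl.
have qw' : has q w' by rewrite -has_eq.
have wE := first_occurrenceE a qw; have w'E := first_occurrenceE a qw'.
rewrite (letter_class_image (nth_find a qw)) in wE.
rewrite (letter_class_image (nth_find a qw')) in w'E.
have size_w := congr1 size wE; rewrite size_cat /= in size_w.
have bfE : before_first q w' = before_first q w.
  apply: irreducible_cong bf (proper_factor_irreducible R_C2.1 relw (x := [::]) wE _).
  lia.
have afE : after_first q w' = after_first q w.
  apply: irreducible_cong af (proper_factor_irreducible R_C2.1 relw
    (x := rcons (before_first q w) a) (y := [::]) _ _); first by rewrite cats0 cat_rcons.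
  lia.
by apply: w'w; rewrite w'E bfE afE -wE.
Qed.

Lemma image_proper_factor w x r y : relation_word R w ->
  map phi w = x ++ r ++ y -> size r < size (map phi w) ->
  ~ relation_word (long_relations S) r.
Proof.
move=> relw wE lt [r' rr'].
have [rr'_cong r'_long] : cong S r r' /\ 1 < size r'.
  by case: rr' => -[h ? ?]; split=> //; [exact: cong_base | exact/cong_sym/cong_base].
have r'r : r' <> r.
  by move=> r'E; subst r'; case: rr' => -[h _ _]; have [_] := S_C2.2 _ _ false true h h erefl.
have rel_r' : relation_word S r' by exists r; case: rr' => -[h _ _]; [right|left].
have [r0' r'E] := letter_free_image (long_relation_word_letter_free S_C2.1 rel_r' r'_long).
have [x0 [ry0 [wE0 _ /map_eq_cat [r0 [y0 [ryE rE _]]]]]] := map_eq_cat wE.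
apply: r'r; rewrite r'E -rE; congr (map phi _).
apply: irreducible_cong (proper_factor_irreducible R_C2.1 relw (x := x0) (y := y0) _ _).
- by apply/cong_map_letter_image; rewrite rE -r'E.
- by rewrite wE0 ryE.
- by move: lt; rewrite -rE !size_map.
Qed.

Lemma relation_word_image w : relation_word R w -> relation_word S (map phi w).
Proof.
move=> relw; apply: long_relation_word.
have [eps eps_spec] := exists_letter_elimination S_C2.
have [w' [ww' w'w relw']] := relation_partner R_C2.2 relw.
apply: (relation_word_of_minimal_reducible (z' := map phi w')).
- rewrite -(eliminate_letter_free eps_spec (relation_word_image_letter_free relw)).
  rewrite -(eliminate_letter_free eps_spec (relation_word_image_letter_free relw')).
  exact/cong_eliminate/cong_map_letter_image.
- by move/(inj_map letter_image_inj).
- by move=> x r y; apply: image_proper_factor.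
Qed.

Lemma C_cond_iso n : C_cond n S -> C_cond n R.
Proof. exact: (C_cond_map letter_image_inj (@relation_word_image) (n := n)). Qed.

End Isomorphism.

Theorem corollary3 (m : nat) (A : Type) (R : rels A) :
  0 < m ->
  generator_minimal R ->
  strongly_C 2 R ->
  admits_strongly_C m R ->
  strongly_C m R.
Proof.
move=> _ R_minimal R_C2 [B [S [[S_Cm S_norep] [F [F_cong F_reflect F_onto F_cat F_nil]]]]].
split; last exact: R_C2.2.
case: (leqP m 2) => [m_le2|m_gt2]; first exact: C_cond_le m_le2 R_C2.1.
have S_C2 : strongly_C 2 S by split=> //; apply: C_cond_le S_Cm; apply: ltnW.
exact: C_cond_iso F_cong F_reflect F_onto F_cat F_nil R_minimal R_C2 S_C2 _ S_Cm.
Qed.
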